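(* Let $T$ be a tree with $m$ edges satisfying $\sum_{e_{uv}\in E(T)}(d_u+d_v)=4m$, and let $s$ be a positive integer. Then the $s$-th subdivision tree $T_s$ is neutral.
   Context: All graphs are finite, simple and connected; $d_u$ denotes the degree of $u$ and sums over edges $e_{uv}$ count each edge once. The $s$-th subdivision graph $G_s$ of a graph $G$ is obtained by inserting $s$ new vertices into each edge of $G$ (i.e., replacing each edge by a path with $s$ internal vertices). For a graph $G=(V,E)$ with $m=|E|\geq1$, the assortativity coefficient is $$r(G)=\frac{m^{-1}\sum_{e_{uv}\in E} d_{u}d_{v}-\Big[m^{-1}\sum_{e_{uv}\in E} \tfrac{1}{2}(d_{u}+d_{v})\Big]^{2}}{m^{-1}\sum_{e_{uv}\in E} \tfrac{1}{2}(d^{2}_{u}+d^{2}_{v})-\Big[m^{-1}\sum_{e_{uv}\in E} \tfrac{1}{2}(d_{u}+d_{v})\Big]^{2}},$$ defined whenever the denominator is nonzero; $G$ is neutral if $r(G)$ is defined and equals $0$. *)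

From HB Require Import structures.
From mathcomp Require Import all_boot all_order all_algebra.
Set Implicit Arguments. Unset Strict Implicit. Unset Printing Implicit Defensive.
Import Order.TTheory GRing.Theory Num.Theory.
Local Open Scope ring_scope.

Section Graphs.
Variable V : finType.
Variable adj : rel V.

Definition simple_graph : Prop := symmetric adj /\ irreflexive adj.

Definition connected_graph : Prop := forall u v : V, connect adj u v.

Definition acyclic_graph : Prop :=
  forall c : seq V, uniq c -> (3 <= size c)%N -> ~~ cycle adj c.

Definition is_tree : Prop := simple_graph /\ connected_graph /\ acyclic_graph.

Definition deg (u : V) : nat := #|[set v | adj u v]|.

(* sum of f u v over the edges e_uv, each edge counted once: half of the
   sum over ordered adjacent pairs (f is always symmetric below) *)
Definition edge_sum (f : V -> V -> rat) : rat :=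
  (\sum_(u : V) \sum_(v : V | adj u v) f u v) / 2.

Definition nedges : rat := edge_sum (fun _ _ => 1).

Definition dR (u : V) : rat := (deg u)%:R.

Definition assort_mean : rat :=
  nedges^-1 * edge_sum (fun u v => (dR u + dR v) / 2).

Definition assort_num : rat :=
  nedges^-1 * edge_sum (fun u v => dR u * dR v) - assort_mean ^+ 2.

Definition assort_den : rat :=
  nedges^-1 * edge_sum (fun u v => (dR u ^+ 2 + dR v ^+ 2) / 2) - assort_mean ^+ 2.

(* assortativity coefficient r(G) (meaningful when the denominator is nonzero) *)
Definition assortativity : rat := assort_num / assort_den.

Definition neutral : Prop :=
  (0 < nedges) /\ assort_den != 0 /\ assortativity = 0.

(* edges of G, oriented by enum_rank: (u,v) with adj u v and rank u < rank v *)
Definition oedgeb (x : V * V) : bool :=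
  adj x.1 x.2 && (enum_rank x.1 < enum_rank x.2)%N.

Definition oedge := {x : V * V | oedgeb x}.

(* vertices of G_s: original vertices, plus s new vertices (e, i), i < s,
   on each edge e *)
Definition subdiv_vertex (s : nat) : finType := (V + (oedge * 'I_s))%type.

(* the edge e = (u,v) becomes the path u - (e,0) - (e,1) - ... - (e,s-1) - v *)
Definition subdiv_adj (s : nat) : rel (subdiv_vertex s) :=
  fun x y =>
    match x, y with
    | inl u, inl v => (s == 0%N) && adj u v
    | inl u, inr (e, i) =>
        (((i : nat) == 0%N) && ((val e).1 == u)) ||
        (((i : nat) == s.-1) && ((val e).2 == u))
    | inr (e, i), inl u =>
        (((i : nat) == 0%N) && ((val e).1 == u)) ||
        (((i : nat) == s.-1) && ((val e).2 == u))
    | inr (e, i), inr (f, j) =>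
        (e == f) && ((i.+1 == j :> nat) || (j.+1 == i :> nat))
    end.

End Graphs.

Arguments subdiv_vertex {V} adj s.
Arguments subdiv_adj {V} adj s.
Arguments oedge {V} adj.

(* In the subdivision T_s every edge has an endpoint of degree 2, hence
   d_u d_v = 2 (d_u + d_v) - 4 on every edge.  The hypothesis
   sum_e (d_u + d_v) = 4m says sum_x d_x (d_x - 2) = 0, and subdivision keeps
   this sum because the new vertices have degree 2; so the mean endpoint degree
   of T_s is 2 and the numerator of r vanishes.  The denominator is then
   sum_x d_x (d_x - 2)^2 / (2m), positive because a leaf contributes 1. *)

From mathcomp Require Import all_boot all_order all_algebra zify ring lra.
Set Implicit Arguments. Unset Strict Implicit. Unset Printing Implicit Defensive.
Import Order.TTheory GRing.Theory Num.Theory.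
Local Open Scope ring_scope.

Section EdgeSums.
Variables (W : finType) (a : rel W).
Hypothesis a_sym : symmetric a.

Lemma edge_sum_additive (f : W -> W -> rat) (F : W -> rat) :
  (forall x y, a x y -> f x y = F x + F y) ->
  edge_sum a f = \sum_x dR a x * F x.
Proof.
move=> f_split; rewrite /edge_sum.
have sum_left : \sum_x \sum_(y | a x y) F x = \sum_x dR a x * F x.
  apply: eq_bigr => x _.
  rewrite (eq_bigl (fun y => y \in [set y | a x y])); last by move=> y; rewrite inE.
  by rewrite sumr_const /dR /deg mulr_natl.
have sum_right : \sum_x \sum_(y | a x y) F y = \sum_x dR a x * F x.
  rewrite (exchange_big_dep xpredT) //= -sum_left.
  by apply: eq_bigr => y _; apply: eq_bigl => x; rewrite a_sym.
have -> : \sum_x \sum_(y | a x y) f x y =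
          \sum_x \sum_(y | a x y) F x + \sum_x \sum_(y | a x y) F y.
  rewrite -big_split /=; apply: eq_bigr => x _; rewrite -big_split /=.
  by apply: eq_bigr => y /f_split.
by rewrite sum_left sum_right; field.
Qed.

Lemma edge_of_nedges_gt0 : 0 < nedges a -> exists x y, a x y.
Proof.
case: (pickP (fun p : W * W => a p.1 p.2)) => [[x y] xy _|no_edge].
  by exists x, y.
rewrite /nedges /edge_sum big1 ?mul0r ?ltxx // => x _.
by rewrite big_pred0 // => y; exact: (no_edge (x, y)).
Qed.

Lemma edge_sum_deg_eq4m :
  edge_sum a (fun x y => dR a x + dR a y) = 4 * nedges a ->
  \sum_x dR a x * (dR a x - 2) = 0.
Proof.
rewrite /nedges (edge_sum_additive (F := dR a)) //.
rewrite (edge_sum_additive (F := fun=> 1 / 2)) => [deg2_sum|*]; last by field.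
transitivity (\sum_x dR a x * dR a x - 4 * \sum_x dR a x * (1 / 2)).
  by rewrite mulr_sumr -sumrB; apply: eq_bigr => x _; field.
by rewrite deg2_sum subrr.
Qed.

Lemma neutral_of_deg2_endpoints :
  (forall x y, a x y -> (deg a x == 2) || (deg a y == 2))%N ->
  \sum_x dR a x * (dR a x - 2) = 0 ->
  0 < \sum_x dR a x * (dR a x - 2) ^+ 2 ->
  neutral a.
Proof.
move=> deg2_end excess0 spread_gt0.
set D := \sum_x dR a x; set spread := \sum_x _ in spread_gt0.
have edge_sum_excess (f : W -> W -> rat) (c2 c1 c0 : rat) :
    (forall x y, a x y -> f x y =
       c2 * (dR a x - 2) ^+ 2 + c1 * (dR a x - 2) + c0 +
      (c2 * (dR a y - 2) ^+ 2 + c1 * (dR a y - 2) + c0)) ->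
    edge_sum a f = c2 * spread + c0 * D.
  move=> /edge_sum_additive ->.
  transitivity (c2 * spread + c1 * \sum_x dR a x * (dR a x - 2) + c0 * D).
    by rewrite /spread /D !mulr_sumr -!big_split /=; apply: eq_bigr => x _; ring.
  by rewrite excess0 mulr0 addr0.
have D_gt0 : 0 < D.
  have D_ge0 : 0 <= D by apply: sumr_ge0 => x _; exact: ler0n.
  rewrite lt_def D_ge0 andbT; apply: contraTneq spread_gt0 => /psumr_eq0P dR0.
  by rewrite /spread big1 ?ltxx // => x _; rewrite dR0 ?mul0r // => y _; exact: ler0n.
have m_eq : nedges a = D / 2.
  rewrite /nedges (edge_sum_excess _ 0 0 (1 / 2)); first by field.
  by move=> *; field.
have mean2 : assort_mean a = 2.
  rewrite /assort_mean m_eq (edge_sum_excess _ 0 (1 / 2) 1); first by field; lra.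
  by move=> *; field.
split; first by rewrite m_eq; lra.
have num0 : assort_num a = 0.
  rewrite /assort_num mean2 m_eq (edge_sum_excess _ 0 2 2); first by field; lra.
  move=> x y /deg2_end /orP[] /eqP deg2; rewrite /dR deg2; ring.
have den_eq : assort_den a = spread / D.
  rewrite /assort_den mean2 m_eq (edge_sum_excess _ (1 / 2) 2 2); first by field; lra.
  by move=> *; field.
split; last by rewrite /assortativity num0 mul0r.
by rewrite den_eq lt0r_neq0 // divr_gt0.
Qed.

End EdgeSums.

Section Leaves.
Variables (V : finType) (adj : rel V).
Hypotheses (adj_sym : symmetric adj) (adj_irr : irreflexive adj).
Hypothesis adj_acyclic : acyclic_graph adj.

Lemma acyclic_path_chord x y p z :
  uniq (x :: y :: p) -> path adj x (y :: p) -> z \in p -> ~~ adj x z.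
Proof.
move=> + + z_p; case/splitPr: z_p => p1 p2 uniq_p path_p; apply/negP => xz.
have c_uniq : uniq (x :: rcons (y :: p1) z).
  move: uniq_p; rewrite -[x :: _]/((x :: y :: p1) ++ _) -cat_rcons.
  by rewrite cat_uniq => /andP[].
have c_path : path adj x (rcons (y :: p1) z).
  by move: path_p; rewrite -[y :: _]/((y :: p1) ++ _) -cat_rcons cat_path => /andP[].
have c_size : (3 <= size (x :: rcons (y :: p1) z))%N by rewrite /= size_rcons.
move/negP: (adj_acyclic c_uniq c_size); apply.
rewrite -[cycle _ _]/(path adj x (rcons (rcons (y :: p1) z) x)).
by rewrite rcons_path c_path last_rcons adj_sym.
Qed.

Lemma acyclic_path_extend x y p :
  uniq (x :: y :: p) -> path adj x (y :: p) -> (deg adj x != 1)%N ->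
  exists z, uniq (z :: x :: y :: p) /\ path adj z (x :: y :: p).
Proof.
move=> uniq_p path_p inner_x.
have xy : adj x y by case/andP: path_p.
have [z] : exists z, z \in [set v | adj x v] :\ y.
  by apply/card_gt0P; move: inner_x; rewrite /deg (cardsD1 y) inE xy; lia.
rewrite !inE => /andP [zy xz]; exists z; split.
  have zx : z != x by apply: contraTneq xz => ->; rewrite adj_irr.
  have zp : z \notin p := contraL (acyclic_path_chord uniq_p path_p) xz.
  by rewrite cons_uniq uniq_p andbT !inE (negbTE zx) (negbTE zy) (negbTE zp).
by apply/andP; split; rewrite // adj_sym.
Qed.

Lemma acyclic_has_leaf u v : adj u v -> exists w, deg adj w = 1%N.
Proof.
move=> uv.
(* Extend a simple path at its non-leaf end until it would exceed #|V| vertices. *)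
suff leaf_from : forall n x y p, (#|V| <= n + size (x :: y :: p))%N ->
    uniq (x :: y :: p) -> path adj x (y :: p) -> exists w, deg adj w = 1%N.
  apply: (leaf_from #|V| u v [::]); first exact: leq_addr.
    by rewrite /= inE andbT; apply: contraTneq uv => ->; rewrite adj_irr.
  by rewrite /= uv.
elim=> [|n IHn] x y p le_V uniq_p path_p;
  (have [leaf_x|inner_x] := eqVneq (deg adj x) 1%N; first by exists x);
  have [z [uniq_z path_z]] := acyclic_path_extend uniq_p path_p inner_x.
  have := max_card (mem (z :: x :: y :: p)); rewrite (card_uniqP uniq_z).
  by move: le_V => /=; lia.
by apply: (IHn z x (y :: p)) => //; move: le_V => /=; lia.
Qed.

Lemma acyclic_deg_spread_gt0 u v :
  adj u v -> 0 < \sum_x dR adj x * (dR adj x - 2) ^+ 2.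
Proof.
move=> /acyclic_has_leaf [w leaf_w]; rewrite (bigD1 w) //= /dR leaf_w.
rewrite ltr_pwDl ?sumr_ge0 // => x _.
by rewrite mulr_ge0 ?sqr_ge0 ?ler0n.
Qed.

End Leaves.

Section Subdivision.
Variables (V : finType) (adj : rel V).

Lemma oedge_adj (e : oedge adj) : adj (val e).1 (val e).2.
Proof. by case/andP: (valP e). Qed.

Lemma oedge_rank_lt (e : oedge adj) : (enum_rank (val e).1 < enum_rank (val e).2)%N.
Proof. by case/andP: (valP e). Qed.

Lemma oedge_neq (e : oedge adj) : (val e).1 != (val e).2.
Proof. by apply: contraTneq (oedge_rank_lt e) => ->; rewrite ltnn. Qed.

Lemma subdiv_sym s : symmetric adj -> symmetric (subdiv_adj adj s).
Proof.
move=> adj_sym [u|[e i]] [v|[f j]] //=; first by rewrite adj_sym.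
by rewrite eq_sym orbC.
Qed.

Variable s : nat.
Local Notation Ts := (subdiv_adj adj s.+1).

Lemma deg_subdiv_inr e (i : 'I_s.+1) : deg Ts (inr (e, i)) = 2%N.
Proof.
pose prev : subdiv_vertex adj s.+1 :=
  if i == 0 :> nat then inl (val e).1 else inr (e, inord i.-1).
pose next : subdiv_vertex adj s.+1 :=
  if i == s :> nat then inl (val e).2 else inr (e, inord i.+1).
have i_le := ltn_ord i.
rewrite /deg; have -> : [set y | Ts (inr (e, i)) y] = [set prev; next].
  apply/setP => -[u | [f j]]; rewrite !inE /prev /next -!sum_eqE /=.
    by case: (i =P 0%N :> nat) => i0; case: (i =P s :> nat) => i_s /=;
      rewrite ?(eq_sym u).
  have j_le := ltn_ord j.
  case: (i =P 0%N :> nat) => i0; case: (i =P s :> nat) => i_s /=;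
    rewrite ?xpair_eqE -?val_eqE /= ?inordK ?(eq_sym (val f)) ?orbF //;
    by case: (val e == val f) => //=; lia.
rewrite cards2 /prev /next -sum_eqE.
case: (i =P 0%N :> nat) => i0; case: (i =P s :> nat) => i_s //=.
  by rewrite oedge_neq.
by rewrite xpair_eqE eqxx /= -val_eqE /= !inordK; lia.
Qed.

Lemma subdiv_edge_deg2 x y : Ts x y -> (deg Ts x == 2) || (deg Ts y == 2)%N.
Proof.
by case: x => [u|[e i]]; case: y => [v|[f j]] //= _; rewrite deg_subdiv_inr ?orbT.
Qed.

Hypotheses (adj_sym : symmetric adj) (adj_irr : irreflexive adj).

Lemma adj_oedge u v : adj u v -> exists e : oedge adj,
  (u = (val e).1 /\ v = (val e).2) \/ (u = (val e).2 /\ v = (val e).1).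
Proof.
move=> uv; case: (ltngtP (enum_rank u) (enum_rank v)) => [lt_uv|lt_vu|eq_uv].
- have e_uv : oedgeb adj (u, v) by rewrite /oedgeb /= uv.
  by exists (Sub (u, v) e_uv); left.
- have e_vu : oedgeb adj (v, u) by rewrite /oedgeb /= adj_sym uv.
  by exists (Sub (v, u) e_vu); right.
- by move/val_inj/enum_rank_inj: eq_uv uv => ->; rewrite adj_irr.
Qed.

(* The neighbour of [inl u] on the path replacing the edge [uv] (junk value
   [inl u] when [uv] is not an edge). *)
Definition subdiv_step (u v : V) : subdiv_vertex adj s.+1 :=
  if insub (u, v) is Some e then inr (e, ord0)
  else if insub (v, u) is Some e then inr (e, ord_max) else inl u.

Lemma subdiv_step_oedge (e : oedge adj) :
  subdiv_step (val e).1 (val e).2 = inr (e, ord0).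
Proof. by rewrite /subdiv_step -surjective_pairing valK. Qed.

Lemma subdiv_step_oedge_rev (e : oedge adj) :
  subdiv_step (val e).2 (val e).1 = inr (e, ord_max).
Proof.
have rev_not_oedge : oedgeb adj ((val e).2, (val e).1) = false.
  by rewrite /oedgeb ltnNge ltnW ?andbF // oedge_rank_lt.
by rewrite /subdiv_step (insubF _ rev_not_oedge) -surjective_pairing valK.
Qed.

Lemma deg_subdiv_inl u : deg Ts (inl u) = deg adj u.
Proof.
rewrite /deg; have -> : [set y | Ts (inl u) y] = subdiv_step u @: [set v | adj u v].
  apply/setP => y; rewrite inE; apply/idP/imsetP.
    case: y => [w | [e i]] //= /orP[] /andP [/eqP i_end /eqP <-].
      exists (val e).2; first by rewrite inE oedge_adj.
      by rewrite subdiv_step_oedge; congr (inr (_, _)); apply: val_inj.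
    exists (val e).1; first by rewrite inE adj_sym oedge_adj.
    by rewrite subdiv_step_oedge_rev; congr (inr (_, _)); apply: val_inj.
  case=> v; rewrite inE => /adj_oedge [e [[-> ->]|[-> ->]]] ->.
    by rewrite subdiv_step_oedge /= eqxx.
  by rewrite subdiv_step_oedge_rev /= !eqxx orbT.
rewrite card_in_imset //.
apply: (@can_in_inj _ _ _ _ (fun y => if y is inr (e, _)
  then (if (val e).1 == u then (val e).2 else (val e).1) else u)) => v.
rewrite inE => /adj_oedge [e [[-> ->]|[-> ->]]].
  by rewrite subdiv_step_oedge /= eqxx.
by rewrite subdiv_step_oedge_rev /= ifN; last exact: oedge_neq.
Qed.

Lemma sum_subdiv_deg (H : nat -> rat) :
  H 2%N = 0 -> \sum_x H (deg Ts x) = \sum_u H (deg adj u).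
Proof.
move=> H2; rewrite big_sumType /= [X in _ + X]big1 ?addr0 => [|[e i] _].
  by apply: eq_bigr => u _; rewrite deg_subdiv_inl.
by rewrite deg_subdiv_inr.
Qed.

End Subdivision.

Theorem theorem1 (V : finType) (adj : rel V) (s : nat) :
  is_tree adj ->
  0 < nedges adj ->
  edge_sum adj (fun u v => dR adj u + dR adj v) = 4 * nedges adj ->
  (0 < s)%N ->
  neutral (subdiv_adj adj s).
Proof.
move=> [[adj_sym adj_irr] [_ adj_acyclic]] m_gt0 deg_sum; case: s => [//|s] _.
have [u [v uv]] := edge_of_nedges_gt0 m_gt0.
have sum_Ts := @sum_subdiv_deg V adj s adj_sym adj_irr.
apply: neutral_of_deg2_endpoints; first exact: subdiv_sym.
- exact: subdiv_edge_deg2.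
- rewrite (sum_Ts (fun n => n%:R * (n%:R - 2))) ?subrr ?mulr0 //.
  exact: edge_sum_deg_eq4m.
- rewrite (sum_Ts (fun n => n%:R * (n%:R - 2) ^+ 2)) ?subrr ?expr0n ?mulr0 //.
  exact: acyclic_deg_spread_gt0 uv.
Qed.
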